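(* Assume conditions (C1)–(C5). Let $\zeta\in\Theta$ be $q_0$-periodic for some $q_0\in\mathbb N$, i.e. $\zeta_{k+q_0}=\zeta_k$ for all $k\in\mathbb Z$, and let $p_0=\mathrm{lcm}\{q_0,p\}/p$. Then $\varphi_\zeta(t+p_0\omega)=\varphi_\zeta(t)$ for all $t\in\mathbb T_0$.
   Context: Fix integers $m,n\ge1$ and $r\ge0$. Cells are indexed by pairs $(i,j)$, $1\le i\le m$, $1\le j\le n$. The $r$-neighbourhood of $(i,j)$ is $N_r(i,j)=\{(h,l):1\le h\le m,\ 1\le l\le n,\ \max(|h-i|,|l-j|)\le r\}$. Fix constants $a_{ij}>0$, $C^{hl}_{ij}\ge0$, and a continuous function $f:\mathbb R\to\mathbb R$. Vectors of $\mathbb R^{mn}$ are written $v=\{v_{ij}\}$, with norm $\|v\|=\max_{(i,j)}|v_{ij}|$. Time scale: $\{\theta_k\}_{k\in\mathbb Z}$ is strictly increasing, $\theta_{-1}<0<\theta_0$, and there exist $\omega>0$ and $p\in\mathbb N$ with $\theta_{k+2p}=\theta_k+\omega$ for all $k$. Set $\mathbb T_0=\bigcup_{k\in\mathbb Z}[\theta_{2k-1},\theta_{2k}]$, $\delta_k=\theta_{2k+1}-\theta_{2k}$, $\eta_k=\theta_{2k}-\theta_{2k-1}$ (both $p$-periodic in $k$), $\delta=\max_{1\le k\le p}\delta_k$. On $\mathbb T_0'=\mathbb T_0\setminus\{\theta_{2k-1}:k\in\mathbb Z\}$ define $\psi(t)=t-\sum_{0<\theta_{2k}<t}\delta_k$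 for $t\ge0$ and $\psi(t)=t+\sum_{t\le\theta_{2k}<0}\delta_k$ for $t<0$; put $s_k=\psi(\theta_{2k})$, and write $\psi(\omega):=\omega-\sum_{k=1}^p\delta_k=\sum_{k=1}^p\eta_k$. Inputs: $\Lambda\subset\mathbb R^{mn}$ is compact and $F:\Lambda\to\Lambda$ is continuous. $\Theta$ is the set of all sequences $\zeta=\{\zeta_k\}_{k\in\mathbb Z}$, $\zeta_k=\{\zeta^{ij}_k\}\in\Lambda$, with $\zeta_{k+1}=F(\zeta_k)$ for all $k\in\mathbb Z$. For $\zeta\in\Theta$, $L_{ij}(t,\zeta)=\zeta^{ij}_k$ for $t\in[\theta_{2k-1},\theta_{2k}]$. Network $(N_\zeta)$ on $\mathbb T_0$: a solution on $\mathbb T_0$ is a function continuous and (one-sidedly at endpoints) differentiable on each $[\theta_{2k-1},\theta_{2k}]$ satisfying there $x_{ij}'=-a_{ij}x_{ij}-\sum_{(h,l)\in N_r(i,j)}C^{hl}_{ij}f(x_{hl})x_{ij}+\zeta^{ij}_k$, together with $x_{ij}(\theta_{2k+1})=(1-\delta_ka_{ij})x_{ij}(\theta_{2k})-\delta_k\sum_{(h,l)\in N_r(i,j)}C^{hl}_{ij}f(x_{hl}(\theta_{2k}))x_{ij}(\theta_{2k})+\delta_k\zeta^{ij}_k$ (this is the $\Delta$-equation $x^\Delta_{ij}=-a_{ij}x_{ij}-\sum C^{hl}_{ij}f(x_{hl})x_{ij}+L_{ij}(t,\zeta)$ on $\mathbb T_0$). Let $u_{ij}(s,\tau)=e^{-a_{ij}(s-\tau)}\prod_{\nu=l}^{k}(1-\delta_\nu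 a_{ij})$ if $s_{l-1}<\tau\le s_l$, $s_k<s\le s_{k+1}$, $k\ge l$, and $u_{ij}(s,\tau)=e^{-a_{ij}(s-\tau)}$ if $s_k<\tau\le s\le s_{k+1}$. Let $\lambda_{ij}=a_{ij}-\frac1{\psi(\omega)}\sum_{\nu=0}^{p-1}\ln|1-\delta_\nu a_{ij}|$, $\lambda=\min_{(i,j)}\lambda_{ij}$. Conditions: (C1) $\delta_ka_{ij}\ne1$ for all $i,j,k$; (C2) $\lambda>0$; (C3) $\sup_{s\in\mathbb R}|f(s)|\le M_f$ for some $M_f>0$; (C4) $|f(s_1)-f(s_2)|\le L_f|s_1-s_2|$ for all $s_1,s_2$, for some $L_f>0$. Under (C1),(C2) fix positive numbers $K_{ij}$ with $|u_{ij}(s,\tau)|\le K_{ij}e^{-\lambda_{ij}(s-\tau)}$ for $s\ge\tau$. Define $\bar c=\max_{(i,j)}\big(\frac{K_{ij}}{\lambda_{ij}}+\frac{p\delta K_{ij}}{1-e^{-\lambda_{ij}\psi(\omega)}}\big)\sum_{(h,l)\in N_r(i,j)}C^{hl}_{ij}$, $M_F=\max_{\eta\in\Lambda}\|F(\eta)\|$, $H_0=\frac{M_F}{1-M_f\bar c}\max_{(i,j)}\big(\frac{K_{ij}}{\lambda_{ij}}+\frac{p\delta K_{ij}}{1-e^{-\lambda_{ij}\psi(\omega)}}\big)$. (C5) $(M_f+H_0L_f)\bar c<1$. $\varphi_\zeta$ denotes the unique solution of $(N_\zeta)$ defined on all of $\mathbb T_0$ with $\sup_{t\in\mathbb T_0}\|\varphi_\zeta(t)\|\le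 H_0$ (it exists and is unique under (C1)–(C5)). *)

From Stdlib Require Import Reals Lra Lia ZArith Arith List.
Import ListNotations.
Open Scope R_scope.

(** Vectors of R^{mn}: entries v i j for 1 <= i <= m, 1 <= j <= n
    (values at other indices are irrelevant and never used). *)
Definition vec := nat -> nat -> R.

Definition valid (m n i j : nat) : Prop := (1 <= i <= m)%nat /\ (1 <= j <= n)%nat.

Definition idx (m n : nat) : list (nat * nat) := list_prod (seq 1 m) (seq 1 n).

(** max / min over all (i,j) (m,n >= 1, so the seed (1,1) is itself an index). *)
Definition maxij (m n : nat) (g : nat -> nat -> R) : R :=
  fold_right Rmax (g 1%nat 1%nat) (map (fun ij => g (fst ij) (snd ij)) (idx m n)).
Definition minij (m n : nat) (g : nat -> nat -> R) : R :=
  fold_right Rmin (g 1%nat 1%nat) (map (fun ij => g (fst ij) (snd ij)) (idx m n)).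

Definition vnorm (m n : nat) (v : vec) : R := maxij m n (fun i j => Rabs (v i j)).
Definition vsub (v w : vec) : vec := fun i j => v i j - w i j.

(** (h,l) in N_r(i,j) (for valid h,l):  max(|h-i|,|l-j|) <= r *)
Definition inNb (r i j h l : nat) : bool :=
  (Nat.leb (h - i) r && Nat.leb (i - h) r && Nat.leb (l - j) r && Nat.leb (j - l) r)%bool.

Definition sumN (m n r i j : nat) (g : nat -> nat -> R) : R :=
  fold_right Rplus 0
    (map (fun hl => g (fst hl) (snd hl))
       (filter (fun hl => inNb r i j (fst hl) (snd hl)) (idx m n))).

Fixpoint sum_range (g : Z -> R) (start : Z) (cnt : nat) : R :=
  match cnt with O => 0 | S c => g start + sum_range g (start + 1)%Z c end.
Fixpoint prod_range (g : Z -> R) (start : Z) (cnt : nat) : R :=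
  match cnt with O => 1 | S c => g start * prod_range g (start + 1)%Z c end.
Fixpoint max_range (g : Z -> R) (start : Z) (cnt : nat) : R :=
  match cnt with O => g start | S c => Rmax (g start) (max_range g (start + 1)%Z c) end.

Definition dlt (theta : Z -> R) (k : Z) : R := theta (2 * k + 1)%Z - theta (2 * k)%Z.
Definition eta (theta : Z -> R) (k : Z) : R := theta (2 * k)%Z - theta (2 * k - 1)%Z.
Definition inT0 (theta : Z -> R) (t : R) : Prop :=
  exists k : Z, theta (2 * k - 1)%Z <= t <= theta (2 * k)%Z.
Definition psi_omega (theta : Z -> R) (omega : R) (p : nat) : R :=
  omega - sum_range (dlt theta) 1 p.
(** delta = max_{1<=k<=p} delta_k *)
Definition delta_max (theta : Z -> R) (p : nat) : R := max_range (dlt theta) 1 (p - 1).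

(** s_k = psi(theta_{2k}).  Since theta_{2j} > 0 iff j >= 0:
    for k >= 0, psi(theta_{2k}) = theta_{2k} - sum_{j=0}^{k-1} delta_j,
    for k < 0,  psi(theta_{2k}) = theta_{2k} + sum_{j=k}^{-1} delta_j. *)
Definition s_pt (theta : Z -> R) (k : Z) : R :=
  if (0 <=? k)%Z then theta (2 * k)%Z - sum_range (dlt theta) 0 (Z.to_nat k)
  else theta (2 * k)%Z + sum_range (dlt theta) k (Z.to_nat (- k)).

(** u_ij(s,tau) when s_k < s <= s_{k+1}, s_{l-1} < tau <= s_l, tau <= s (so l <= k+1):
    e^{-a(s-tau)} prod_{nu=l}^{k} (1 - delta_nu a)   (empty product when l = k+1). *)
Definition u_val (theta : Z -> R) (a : R) (k l : Z) (s tau : R) : R :=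
  exp (- a * (s - tau)) * prod_range (fun nu => 1 - dlt theta nu * a) l (Z.to_nat (k - l + 1)).

Definition K_bound (theta : Z -> R) (a lam K : R) : Prop :=
  forall (k l : Z) (s tau : R),
    s_pt theta k < s <= s_pt theta (k + 1) ->
    s_pt theta (l - 1) < tau <= s_pt theta l ->
    tau <= s ->
    Rabs (u_val theta a k l s tau) <= K * exp (- lam * (s - tau)).

Definition lam_of (theta : Z -> R) (omega : R) (p : nat) (a : R) : R :=
  a - / psi_omega theta omega p *
      sum_range (fun nu => ln (Rabs (1 - dlt theta nu * a))) 0 p.

Definition lamij (theta : Z -> R) (omega : R) (p : nat) (a : nat -> nat -> R) (i j : nat) : R :=
  lam_of theta omega p (a i j).

Definition Kfac (theta : Z -> R) (omega : R) (p : nat) (a : nat -> nat -> R)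
  (K : nat -> nat -> R) (i j : nat) : R :=
  K i j / lamij theta omega p a i j
  + INR p * delta_max theta p * K i j
    / (1 - exp (- lamij theta omega p a i j * psi_omega theta omega p)).

Definition cbar (m n r : nat) (theta : Z -> R) (omega : R) (p : nat)
  (a : nat -> nat -> R) (C : nat -> nat -> nat -> nat -> R) (K : nat -> nat -> R) : R :=
  maxij m n (fun i j => Kfac theta omega p a K i j * sumN m n r i j (fun h l => C i j h l)).

Definition H0 (m n r : nat) (theta : Z -> R) (omega : R) (p : nat)
  (a : nat -> nat -> R) (C : nat -> nat -> nat -> nat -> R) (K : nat -> nat -> R)
  (Mf MF : R) : R :=
  MF / (1 - Mf * cbar m n r theta omega p a C K) * maxij m n (Kfac theta omega p a K).

Definition vopen (m n : nat) (O : vec -> Prop) : Prop :=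
  forall v, O v -> exists eps, 0 < eps /\ forall w, vnorm m n (vsub w v) < eps -> O w.
Definition vcompact (m n : nat) (L : vec -> Prop) : Prop :=
  forall (I : Type) (O : I -> vec -> Prop),
    (forall i, vopen m n (O i)) ->
    (forall v, L v -> exists i, O i v) ->
    exists D : list I, forall v, L v -> exists i, In i D /\ O i v.
Definition vcont_on (m n : nat) (L : vec -> Prop) (G : vec -> vec) : Prop :=
  forall v, L v -> forall eps, 0 < eps -> exists d, 0 < d /\
    forall w, L w -> vnorm m n (vsub w v) < d -> vnorm m n (vsub (G w) (G v)) < eps.

Definition deriv_within (lo hi : R) (g : R -> R) (t d : R) : Prop :=
  forall eps, 0 < eps -> exists del, 0 < del /\
    forall h, h <> 0 -> Rabs h < del -> lo <= t + h <= hi ->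
      Rabs ((g (t + h) - g t) / h - d) < eps.

Definition is_solution (m n r : nat) (a : nat -> nat -> R) (C : nat -> nat -> nat -> nat -> R)
  (f : R -> R) (theta : Z -> R) (zeta : Z -> vec) (x : R -> vec) : Prop :=
  forall (k : Z) (i j : nat), valid m n i j ->
    (forall t, theta (2 * k - 1)%Z <= t <= theta (2 * k)%Z ->
       deriv_within (theta (2 * k - 1)%Z) (theta (2 * k)%Z) (fun s => x s i j) t
         (- a i j * x t i j
          - sumN m n r i j (fun h l => C i j h l * f (x t h l) * x t i j)
          + zeta k i j))
    /\
    x (theta (2 * k + 1)%Z) i j =
      (1 - dlt theta k * a i j) * x (theta (2 * k)%Z) i j
      - dlt theta k * sumN m n r i j
          (fun h l => C i j h l * f (x (theta (2 * k)%Z) h l) * x (theta (2 * k)%Z) i j)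
      + dlt theta k * zeta k i j.

From Stdlib Require Import Reals Lra Lia ZArith Arith List.
Require Coquelicot.Coquelicot.
Open Scope R_scope.

(* The shifted function [x (. + p0 omega)] solves the same network: the time scale is
   [p0 omega]-periodic with [p0 p] jumps per period, and [zeta] is [p0 p]-periodic because
   [q0] divides [p0 p = lcm q0 p]. The difference [w] of the two solutions solves, in each
   coordinate, a linear impulsive equation [w' = -a w + g] with jumps
   [w+ = (1 - delta a) w + delta g], whose forcing [g] is a difference of couplings, hence
   [|g| <= (Mf + H0 Lf) (sum C) sup|w|]. Bounded solutions of this linear equation satisfy the
   variation-of-constants estimate [sup|w| <= (K/lam + p delta K/(1 - e^{-lam psi(omega)})) sup|g|],
   proved without integrals by a weighted mean value argument on each interval and the
   bound on [u] across the jumps, summed geometrically over periods. So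
   [sup|w| <= (Mf + H0 Lf) cbar sup|w|], and (C5) forces [w = 0]. *)

Lemma Rle_of_le_plus_geometric x y c q :
  0 <= c -> q < 1 -> (forall N, x <= y + c * q ^ N) -> x <= y.
Proof.
  intros Hc Hq Hx.
  destruct (Rle_dec q 0) as [Hq0|Hq0].
  { specialize (Hx 1%nat). simpl in Hx. nra. }
  destruct (Rle_dec x y) as [|Hxy]; auto. exfalso.
  destruct (pow_lt_1_zero q ltac:(rewrite Rabs_pos_eq; lra) ((x - y) / (c + 1)))
    as [N HN]; [apply Rdiv_lt_0_compat; lra|].
  specialize (HN N (Nat.le_refl N)). specialize (Hx N).
  rewrite Rabs_pos_eq in HN by (apply pow_le; lra).
  assert (c * q ^ N <= (c + 1) * q ^ N) by (pose proof (pow_le q N); nra).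
  assert ((c + 1) * q ^ N < x - y).
  { apply (Rmult_lt_compat_l (c + 1)) in HN; [|lra].
    replace ((c + 1) * ((x - y) / (c + 1))) with (x - y) in HN by (field; lra). lra. }
  lra.
Qed.

Lemma Rle_of_forall_small_le A B e0 lam : 0 < e0 -> 0 < lam -> 0 <= A ->
  (forall e, 0 < e <= e0 -> A * (1 - lam * e) <= B) -> A <= B.
Proof.
  intros He0 Hl HA H.
  destruct (Rle_dec A B) as [|Hn]; auto. exfalso.
  assert (HA0 : 0 < A).
  { destruct HA as [|HA]; auto. subst A. specialize (H e0 ltac:(lra)). lra. }
  set (e := Rmin e0 ((A - B) / (2 * A * lam))).
  assert (Hq : 0 < (A - B) / (2 * A * lam)) by (apply Rdiv_lt_0_compat; nra).
  assert (He : 0 < e <= e0) by (unfold e; split; [apply Rmin_pos; lra | apply Rmin_l]).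
  assert (Hle : A * lam * e <= (A - B) / 2).
  { assert (Hen : e <= (A - B) / (2 * A * lam)) by (unfold e; apply Rmin_r).
    apply (Rmult_le_compat_l (A * lam)) in Hen; [|nra].
    replace (A * lam * ((A - B) / (2 * A * lam))) with ((A - B) / 2) in Hen by (field; lra).
    lra. }
  specialize (H e He). nra.
Qed.

Lemma exp_le_mono x y : x <= y -> exp x <= exp y.
Proof. intros [H|H]; [left; apply exp_increasing; exact H | right; rewrite H; reflexivity]. Qed.

Lemma Zperiodic_mult {A : Type} (g : Z -> A) q :
  (forall k, g (k + q)%Z = g k) -> forall c k, g (k + c * q)%Z = g k.
Proof.
  intros Hq c k. induction c as [|c IH|c IH] using Z.peano_ind.
  - f_equal; lia.
  - rewrite <- IH, <- (Hq (k + c * q)%Z). f_equal; lia.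
  - rewrite <- IH, <- (Hq (k + Z.pred c * q)%Z). f_equal; lia.
Qed.

(** * Finite sums and maxima *)

Lemma sum_range_snoc g s c :
  sum_range g s (S c) = sum_range g s c + g (s + Z.of_nat c)%Z.
Proof.
  revert s; induction c as [|c IH]; intros s; simpl.
  - rewrite Z.add_0_r; ring.
  - simpl in IH. rewrite IH.
    replace (s + 1 + Z.of_nat c)%Z with (s + Z.pos (Pos.of_succ_nat c))%Z by lia. ring.
Qed.

Lemma sum_range_app g s c1 c2 :
  sum_range g s (c1 + c2) = sum_range g s c1 + sum_range g (s + Z.of_nat c1)%Z c2.
Proof.
  revert s; induction c1 as [|c1 IH]; intros s; simpl.
  - rewrite Z.add_0_r; ring.
  - rewrite IH. replace (s + 1 + Z.of_nat c1)%Z with (s + Z.pos (Pos.of_succ_nat c1))%Z by lia.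
    ring.
Qed.

Lemma sum_range_ext g1 g2 s c :
  (forall i, g1 i = g2 i) -> sum_range g1 s c = sum_range g2 s c.
Proof. intros H; revert s; induction c; intros s; simpl; auto. rewrite H, IHc; auto. Qed.

Lemma sum_range_sub g1 g2 s c :
  sum_range (fun i => g1 i - g2 i) s c = sum_range g1 s c - sum_range g2 s c.
Proof. revert s; induction c; intros s; simpl; [ring|]. rewrite IHc; ring. Qed.

Lemma sum_range_scale q g s c : sum_range (fun i => q * g i) s c = q * sum_range g s c.
Proof. revert s; induction c; intros s; simpl; [ring|]. rewrite IHc; ring. Qed.

Lemma sum_range_shift g s d c :
  sum_range g (s + d)%Z c = sum_range (fun i => g (i + d)%Z) s c.
Proof.
  revert s; induction c; intros s; simpl; auto.
  rewrite <- IHc. replace (s + d + 1)%Z with (s + 1 + d)%Z by lia. auto.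
Qed.

Lemma sum_range_telescope (g : Z -> R) s c :
  g (s + Z.of_nat c)%Z - g s = sum_range (fun i => g (i + 1)%Z - g i) s c.
Proof.
  revert s; induction c; intros s; simpl.
  - rewrite Z.add_0_r. ring.
  - rewrite <- IHc. replace (s + 1 + Z.of_nat c)%Z with (s + Z.pos (Pos.of_succ_nat c))%Z by lia.
    ring.
Qed.

Lemma sum_range_periodic g s c :
  (forall i, g (i + Z.of_nat c)%Z = g i) -> sum_range g s c = sum_range g 0 c.
Proof.
  intros Hg.
  assert (Hsucc : forall s', sum_range g (s' + 1)%Z c = sum_range g s' c).
  { intros s'. destruct c as [|c]; [reflexivity|].
    rewrite sum_range_snoc. simpl sum_range at 2.
    replace (s' + 1 + Z.of_nat c)%Z with (s' + Z.of_nat (S c))%Z by lia.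
    rewrite Hg. ring. }
  induction s using Z.peano_ind; auto.
  - rewrite <- Z.add_1_r, Hsucc; auto.
  - rewrite <- IHs, <- (Hsucc (Z.pred s)). f_equal. lia.
Qed.

Lemma sum_range_unit_bounds g s c :
  (forall i, (s <= i)%Z -> 0 <= g i <= 1) -> 0 <= sum_range g s c <= INR c.
Proof.
  revert s; induction c; intros s H; simpl sum_range; [simpl; lra|].
  rewrite S_INR.
  specialize (IHc (s + 1)%Z ltac:(intros; apply H; lia)). specialize (H s ltac:(lia)). lra.
Qed.

Lemma max_range_ge g s c i : (i <= c)%nat -> g (s + Z.of_nat i)%Z <= max_range g s c.
Proof.
  revert s i; induction c; intros s i Hi; simpl.
  - replace i with 0%nat by lia. rewrite Z.add_0_r. lra.
  - destruct i.
    + rewrite Z.add_0_r. apply Rmax_l.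
    + eapply Rle_trans; [|apply Rmax_r].
      replace (s + Z.of_nat (S i))%Z with (s + 1 + Z.of_nat i)%Z by lia. apply IHc; lia.
Qed.

Lemma In_idx m n h l : In (h, l) (idx m n) <-> valid m n h l.
Proof. unfold idx, valid. rewrite in_prod_iff, !in_seq. lia. Qed.

Lemma fold_Rmax_ge d L x : In x L -> x <= fold_right Rmax d L.
Proof.
  induction L; simpl; [tauto|]. intros [E|H].
  - subst; apply Rmax_l.
  - eapply Rle_trans; [apply IHL; auto|apply Rmax_r].
Qed.

Lemma fold_Rmin_le d L x : In x L -> fold_right Rmin d L <= x.
Proof.
  induction L; simpl; [tauto|]. intros [E|H].
  - subst; apply Rmin_l.
  - eapply Rle_trans; [apply Rmin_r|apply IHL; auto].
Qed.

Lemma maxij_ge m n g i j : valid m n i j -> g i j <= maxij m n g.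
Proof.
  intros H. apply fold_Rmax_ge.
  apply (in_map (fun ij => g (fst ij) (snd ij)) _ (i, j)), In_idx, H.
Qed.

Lemma minij_le m n g i j : valid m n i j -> minij m n g <= g i j.
Proof.
  intros H. apply fold_Rmin_le.
  apply (in_map (fun ij => g (fst ij) (snd ij)) _ (i, j)), In_idx, H.
Qed.

Lemma vnorm_nonneg m n v : 0 <= vnorm m n v.
Proof.
  unfold vnorm, maxij. apply Rle_trans with (Rabs (v 1%nat 1%nat)); [apply Rabs_pos|].
  induction (map _ (idx m n)); simpl; [lra|]. eapply Rle_trans; [exact IHl|apply Rmax_r].
Qed.

Lemma vnorm_ge m n v i j : valid m n i j -> Rabs (v i j) <= vnorm m n v.
Proof. apply (maxij_ge m n (fun i j => Rabs (v i j))). Qed.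

Lemma fold_Rplus_diff_le {A : Type} (L : list A) (g1 g2 b : A -> R) :
  (forall x, In x L -> Rabs (g1 x - g2 x) <= b x) ->
  Rabs (fold_right Rplus 0 (map g1 L) - fold_right Rplus 0 (map g2 L))
    <= fold_right Rplus 0 (map b L).
Proof.
  induction L as [|y L IH]; simpl; intros H.
  - rewrite Rminus_diag, Rabs_R0; lra.
  - replace (g1 y + fold_right Rplus 0 (map g1 L) - (g2 y + fold_right Rplus 0 (map g2 L)))
      with ((g1 y - g2 y) + (fold_right Rplus 0 (map g1 L) - fold_right Rplus 0 (map g2 L)))
      by ring.
    eapply Rle_trans; [apply Rabs_triang|]. apply Rplus_le_compat; auto.
Qed.

Lemma fold_Rplus_mul_r {A : Type} (L : list A) (g : A -> R) c :
  fold_right Rplus 0 (map (fun x => g x * c) L) = fold_right Rplus 0 (map g L) * c.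
Proof. induction L; simpl; [ring|]. rewrite IHL; ring. Qed.

(** * One-sided derivatives *)

Definition clamp (lo hi r : R) : R := Rmax lo (Rmin hi r).

Lemma clamp_id lo hi r : lo <= r <= hi -> clamp lo hi r = r.
Proof. intros; unfold clamp, Rmax, Rmin; repeat destruct Rle_dec; lra. Qed.

Lemma clamp_in lo hi r : lo <= hi -> lo <= clamp lo hi r <= hi.
Proof. intros; unfold clamp, Rmax, Rmin; repeat destruct Rle_dec; lra. Qed.

Lemma clamp_dist lo hi r t : lo <= t <= hi -> Rabs (clamp lo hi r - t) <= Rabs (r - t).
Proof.
  intros; unfold clamp, Rmax, Rmin; repeat destruct Rle_dec;
    unfold Rabs; repeat destruct Rcase_abs; lra.
Qed.

(* Extending [g] constantly outside [lo, hi] turns one-sided derivatives into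
   Stdlib's two-sided notions. *)
Lemma deriv_within_continuity_pt lo hi g t d :
  lo <= t <= hi -> deriv_within lo hi g t d -> continuity_pt (fun r => g (clamp lo hi r)) t.
Proof.
  intros Ht Hd eps Heps.
  destruct (Hd 1 Rlt_0_1) as [del [Hdel H1]].
  assert (Hd1 : 0 < Rabs d + 1) by (pose proof (Rabs_pos d); lra).
  exists (Rmin del (eps / (Rabs d + 1))).
  split; [apply Rmin_pos; auto; apply Rdiv_lt_0_compat; auto|].
  intros x [_ Hx]. simpl in *. unfold R_dist in *.
  rewrite (clamp_id lo hi t) by lra.
  pose proof (clamp_in lo hi x ltac:(lra)) as Hin.
  pose proof (clamp_dist lo hi x t Ht) as Hcd.
  pose proof (Rmin_l del (eps / (Rabs d + 1))). pose proof (Rmin_r del (eps / (Rabs d + 1))).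
  set (c := clamp lo hi x) in *.
  destruct (Req_dec c t) as [E|E].
  { rewrite E, Rminus_diag, Rabs_R0; lra. }
  set (h := c - t).
  specialize (H1 h ltac:(unfold h; lra) ltac:(unfold h; lra) ltac:(unfold h; lra)).
  replace (t + h) with c in H1 by (unfold h; lra).
  assert (Hb : Rabs (g c - g t) <= (Rabs d + 1) * Rabs h).
  { replace (g c - g t) with (((g c - g t) / h - d) * h + d * h) by (field; unfold h; lra).
    eapply Rle_trans; [apply Rabs_triang|]. rewrite !Rabs_mult.
    pose proof (Rabs_pos h). pose proof (Rabs_pos d). nra. }
  assert (Hh : (Rabs d + 1) * Rabs h < eps).
  { apply Rlt_le_trans with ((Rabs d + 1) * (eps / (Rabs d + 1))).
    - apply Rmult_lt_compat_l; [lra|]. unfold h. lra.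
    - right; field; lra. }
  lra.
Qed.

Lemma deriv_within_bound_left_end lo hi g d M :
  lo < hi -> deriv_within lo hi g lo d ->
  (forall r, lo < r <= hi -> Rabs (g r) <= M) -> Rabs (g lo) <= M.
Proof.
  intros Hlh Hd Hb.
  destruct (Rle_dec (Rabs (g lo)) M) as [|Hn]; auto. exfalso.
  destruct (deriv_within_continuity_pt lo hi g lo d ltac:(lra) Hd (Rabs (g lo) - M) ltac:(lra))
    as [al [Hal Hx]].
  set (r := lo + Rmin (al / 2) (hi - lo)).
  assert (Hr : 0 < Rmin (al / 2) (hi - lo)) by (apply Rmin_pos; lra).
  pose proof (Rmin_l (al / 2) (hi - lo)). pose proof (Rmin_r (al / 2) (hi - lo)).
  specialize (Hx r). simpl in Hx. unfold D_x, no_cond, R_dist in Hx.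
  rewrite (clamp_id lo hi lo), (clamp_id lo hi r) in Hx by (unfold r; lra).
  assert (Hgr : Rabs (g r - g lo) < Rabs (g lo) - M).
  { apply Hx. split; [split; [auto|unfold r; lra]|].
    unfold r. rewrite Rabs_pos_eq; lra. }
  pose proof (Hb r ltac:(unfold r; lra)).
  pose proof (Rabs_triang_inv (g lo) (g r)). rewrite <- Rabs_Ropp in Hgr.
  replace (- (g r - g lo)) with (g lo - g r) in Hgr by ring. lra.
Qed.

Lemma deriv_within_derivable_pt_lim lo hi g c d :
  lo < c < hi -> deriv_within lo hi g c d -> derivable_pt_lim (fun r => g (clamp lo hi r)) c d.
Proof.
  intros Hc Hd eps Heps.
  destruct (Hd eps Heps) as [del [Hdel H1]].
  assert (Hp : 0 < Rmin del (Rmin (c - lo) (hi - c))) by (repeat apply Rmin_pos; lra).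
  exists (mkposreal _ Hp). intros h Hh Hhd. simpl in Hhd.
  pose proof (Rmin_l del (Rmin (c - lo) (hi - c))).
  pose proof (Rmin_r del (Rmin (c - lo) (hi - c))).
  pose proof (Rmin_l (c - lo) (hi - c)). pose proof (Rmin_r (c - lo) (hi - c)).
  assert (Hr : lo <= c + h <= hi) by (revert Hhd; unfold Rabs; destruct Rcase_abs; intros; lra).
  rewrite (clamp_id lo hi c), (clamp_id lo hi (c + h)) by lra.
  apply H1; auto; lra.
Qed.

Lemma deriv_within_shift lo hi g t d P :
  deriv_within (lo + P) (hi + P) g (t + P) d -> deriv_within lo hi (fun s => g (s + P)) t d.
Proof.
  intros H eps Heps. destruct (H eps Heps) as [del [Hdel H1]]. exists del; split; auto.
  intros h Hh Hhd Hr. specialize (H1 h Hh Hhd ltac:(lra)).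
  replace (t + h + P) with (t + P + h) by ring. exact H1.
Qed.

Lemma deriv_within_minus lo hi g1 g2 t d1 d2 :
  deriv_within lo hi g1 t d1 -> deriv_within lo hi g2 t d2 ->
  deriv_within lo hi (fun s => g1 s - g2 s) t (d1 - d2).
Proof.
  intros H1 H2 eps Heps.
  destruct (H1 (eps / 2) ltac:(lra)) as [del1 [Hd1 K1]].
  destruct (H2 (eps / 2) ltac:(lra)) as [del2 [Hd2 K2]].
  exists (Rmin del1 del2); split; [apply Rmin_pos; auto|].
  intros h Hh Hhd Hr.
  pose proof (Rmin_l del1 del2). pose proof (Rmin_r del1 del2).
  specialize (K1 h Hh ltac:(lra) Hr). specialize (K2 h Hh ltac:(lra) Hr).
  replace ((g1 (t + h) - g2 (t + h) - (g1 t - g2 t)) / h - (d1 - d2))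
    with (((g1 (t + h) - g1 t) / h - d1) - ((g2 (t + h) - g2 t) / h - d2)) by (field; auto).
  eapply Rle_lt_trans; [apply Rabs_triang|]. rewrite Rabs_Ropp. lra.
Qed.

Section WeightedIncrement.
Import Coquelicot.Coquelicot.

(* Integral-free variation of constants: if [z' = -a z + g] with [|g| <= G], then
   [W z] with [W r = e^{-a (c0 - r)} Pc] has derivative [W g], dominated by the
   derivative of [K G / lam * e^{-lam (c0 - r)}]; compare the two by the mean value
   theorem. *)
Lemma weighted_increment_bound lo e hi c0 Pc a lam K G (z g : R -> R) :
  lo < e -> e <= hi -> 0 < lam ->
  (forall r, lo <= r <= hi -> deriv_within lo hi z r (- a * z r + g r)) ->
  (forall r, lo <= r <= e -> Rabs (g r) <= G) ->
  (forall r, lo < r <= e -> Rabs (exp (- a * (c0 - r)) * Pc) <= K * exp (- lam * (c0 - r))) ->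
  Rabs (exp (- a * (c0 - e)) * Pc * z e - exp (- a * (c0 - lo)) * Pc * z lo)
    <= K * G / lam * (exp (- lam * (c0 - e)) - exp (- lam * (c0 - lo))).
Proof.
  intros Hle Heh Hlam Hd Hg Hb.
  set (zt := fun r => z (clamp lo hi r)).
  assert (Hzt : forall r, lo <= r <= hi -> zt r = z r)
    by (intros; unfold zt; rewrite clamp_id; auto).
  assert (signed : forall sg, sg = 1 \/ sg = -1 ->
     sg * (exp (- a * (c0 - e)) * Pc * zt e - exp (- a * (c0 - lo)) * Pc * zt lo)
      <= K * G / lam * (exp (- lam * (c0 - e)) - exp (- lam * (c0 - lo)))).
  { intros sg Hsg.
    set (h := fun r => K * G / lam * exp (- lam * (c0 - r))
                       - sg * (exp (- a * (c0 - r)) * Pc * zt r)).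
    set (D := fun r => K * G * exp (- lam * (c0 - r)) - sg * (exp (- a * (c0 - r)) * Pc * g r)).
    set (dh := fun r => if Rlt_dec lo r then D r else 0).
    destruct (MVT_gen h lo e dh) as [c [Hc Heq]].
    { rewrite Rmin_left, Rmax_right by lra. intros x Hx.
      unfold dh; destruct Rlt_dec; [|lra].
      apply is_derive_Reals.
      assert (Hzd : derivable_pt_lim zt x (- a * z x + g x))
        by (apply deriv_within_derivable_pt_lim; [lra|apply Hd; lra]).
      apply is_derive_Reals in Hzd.
      unfold h, D. auto_derive.
      { repeat split; auto. exists (- a * z x + g x); auto. }
      match goal with |- context [Derive ?f x] =>
        replace (Derive f x) with (- a * z x + g x) by (symmetry; apply is_derive_unique; exact Hzd)
      end.
      rewrite Hzt by lra. unfold Rminus. field. lra. }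
    { rewrite Rmin_left, Rmax_right by lra. intros x Hx.
      assert (Hexp : forall b, continuity_pt (fun r => exp (- b * (c0 - r))) x)
        by (intros b; apply derivable_continuous_pt, ex_derive_Reals_0; auto_derive; auto).
      assert (Hcst : forall k, continuity_pt (fun _ => k) x)
        by (intros k; apply continuity_pt_const; intros ? ?; reflexivity).
      unfold h. apply continuity_pt_minus; apply continuity_pt_mult.
      - apply Hcst.
      - apply Hexp.
      - apply Hcst.
      - apply continuity_pt_mult; [apply continuity_pt_mult; [apply Hexp|apply Hcst]|].
        unfold zt. eapply deriv_within_continuity_pt; [|apply Hd]; lra. }
    rewrite Rmin_left, Rmax_right in Hc by lra.
    assert (Hdh : 0 <= dh c).
    { unfold dh; destruct Rlt_dec; [|lra]. unfold D.
      assert (Hx : Rabs (sg * (exp (- a * (c0 - c)) * Pc * g c)) <= K * G * exp (- lam * (c0 - c))).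
      { rewrite !Rabs_mult.
        replace (Rabs sg) with 1 by (destruct Hsg; subst; unfold Rabs; destruct Rcase_abs; lra).
        rewrite <- Rabs_mult.
        specialize (Hb c ltac:(lra)). specialize (Hg c ltac:(lra)).
        pose proof (Rabs_pos (g c)). pose proof (Rabs_pos (exp (- a * (c0 - c)) * Pc)).
        pose proof (exp_pos (- lam * (c0 - c))). nra. }
      pose proof (Rle_abs (sg * (exp (- a * (c0 - c)) * Pc * g c))). lra. }
    assert (0 <= h e - h lo) by (rewrite Heq; nra).
    unfold h in *. lra. }
  rewrite <- (Hzt e), <- (Hzt lo) by lra.
  pose proof (signed 1 (or_introl eq_refl)). pose proof (signed (-1) (or_intror eq_refl)).
  unfold Rabs; destruct Rcase_abs; lra.
Qed.

End WeightedIncrement.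

(** * The time scale *)

(* [psi_at theta l t] is the paper's [psi(t)] for [t] in [[theta_{2l-1}, theta_{2l}]]. *)
Definition psi_at (theta : Z -> R) (l : Z) (t : R) : R := t - theta (2 * l)%Z + s_pt theta l.

Lemma s_pt_succ theta k :
  s_pt theta (k + 1) - s_pt theta k = theta (2 * k + 2)%Z - theta (2 * k + 1)%Z.
Proof.
  unfold s_pt.
  destruct (Z_lt_le_dec k (-1)) as [Hk|Hk].
  - replace (0 <=? k + 1)%Z with false by (symmetry; apply Z.leb_gt; lia).
    replace (0 <=? k)%Z with false by (symmetry; apply Z.leb_gt; lia).
    replace (Z.to_nat (- k)) with (S (Z.to_nat (- (k + 1)))) by lia.
    simpl sum_range. replace (2 * (k + 1))%Z with (2 * k + 2)%Z by lia. unfold dlt. ring.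
  - destruct (Z.eq_dec k (-1)) as [->|E]; [simpl; unfold dlt; simpl; ring|].
    replace (0 <=? k + 1)%Z with true by (symmetry; apply Z.leb_le; lia).
    replace (0 <=? k)%Z with true by (symmetry; apply Z.leb_le; lia).
    replace (Z.to_nat (k + 1)) with (S (Z.to_nat k)) by lia.
    rewrite sum_range_snoc, Z2Nat.id by lia.
    replace (2 * (k + 1))%Z with (2 * k + 2)%Z by lia. simpl (0 + k)%Z. unfold dlt. ring.
Qed.

Lemma psi_at_left theta l : psi_at theta l (theta (2 * l - 1)%Z) = s_pt theta (l - 1).
Proof.
  unfold psi_at. pose proof (s_pt_succ theta (l - 1)) as H.
  replace (l - 1 + 1)%Z with l in H by lia.
  replace (2 * (l - 1) + 2)%Z with (2 * l)%Z in H by lia.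
  replace (2 * (l - 1) + 1)%Z with (2 * l - 1)%Z in H by lia. lra.
Qed.

Lemma u_val_cons theta a k l s tau : (l <= k)%Z ->
  u_val theta a k l s tau = (1 - dlt theta l * a) * u_val theta a k (l + 1) s tau.
Proof.
  intros H. unfold u_val.
  replace (Z.to_nat (k - l + 1)) with (S (Z.to_nat (k - (l + 1) + 1))) by lia.
  simpl prod_range. ring.
Qed.

Lemma u_val_nil theta a k s tau : u_val theta a k (k + 1) s tau = exp (- a * (s - tau)).
Proof. unfold u_val. replace (k - (k + 1) + 1)%Z with 0%Z by lia. simpl. ring. Qed.

Section Monotone.
Variable theta : Z -> R.
Hypothesis theta_incr : forall k1 k2 : Z, (k1 < k2)%Z -> theta k1 < theta k2.

Notation S := (s_pt theta).

Lemma s_pt_lt_succ k : S k < S (k + 1).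
Proof. pose proof (s_pt_succ theta k). pose proof (theta_incr (2*k+1) (2*k+2) ltac:(lia)). lra. Qed.

Lemma s_pt_le k1 k2 : (k1 <= k2)%Z -> S k1 <= S k2.
Proof.
  intros H. replace k2 with (k1 + Z.of_nat (Z.to_nat (k2 - k1)))%Z by lia.
  induction (Z.to_nat (k2 - k1)) as [|c IH]; [rewrite Z.add_0_r; lra|].
  replace (k1 + Z.of_nat (Datatypes.S c))%Z with (k1 + Z.of_nat c + 1)%Z by lia.
  pose proof (s_pt_lt_succ (k1 + Z.of_nat c)). lra.
Qed.

Lemma dlt_pos k : 0 < dlt theta k.
Proof. unfold dlt. pose proof (theta_incr (2*k) (2*k+1) ltac:(lia)). lra. Qed.

(* [K_bound] only covers [tau] in the half-open [(s_{l-1}, s_l]]; the closed left end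
   follows by letting [tau] decrease to [s_{l-1}]. *)
Lemma K_bound_left_end a lam K k l s :
  0 <= a -> 0 < lam -> K_bound theta a lam K ->
  S k < s <= S (k + 1) -> (l <= k + 1)%Z ->
  Rabs (u_val theta a k l s (S (l - 1))) <= K * exp (- lam * (s - S (l - 1))).
Proof.
  intros Ha Hl HK Hs Hlk.
  set (t0 := S (l - 1)).
  assert (Ht0 : t0 <= S k) by (apply s_pt_le; lia).
  assert (HSl : t0 < S l).
  { pose proof (s_pt_lt_succ (l - 1)) as Hsucc. replace (l - 1 + 1)%Z with l in Hsucc by lia.
    exact Hsucc. }
  apply (Rle_of_forall_small_le _ _ (Rmin (S l - t0) (s - t0)) lam); auto.
  { apply Rmin_pos; lra. }
  { apply Rabs_pos. }
  intros e He.
  pose proof (Rmin_l (S l - t0) (s - t0)). pose proof (Rmin_r (S l - t0) (s - t0)).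
  assert (Hb := HK k l s (t0 + e) Hs ltac:(unfold t0 in *; split; lra) ltac:(lra)).
  assert (Hu : u_val theta a k l s (t0 + e) = u_val theta a k l s t0 * exp (a * e)).
  { unfold u_val. replace (- a * (s - (t0 + e))) with (- a * (s - t0) + a * e) by ring.
    rewrite exp_plus. ring. }
  rewrite Hu, Rabs_mult, (Rabs_pos_eq (exp (a * e))) in Hb by (left; apply exp_pos).
  replace (- lam * (s - (t0 + e))) with (- lam * (s - t0) + lam * e) in Hb by ring.
  rewrite exp_plus in Hb.
  set (A := Rabs (u_val theta a k l s t0)) in *.
  set (B := K * exp (- lam * (s - t0))).
  assert (HA : 0 <= A) by apply Rabs_pos.
  assert (Hae : 1 <= exp (a * e)) by (pose proof (exp_ineq1_le (a * e)); nra).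
  assert (Hinv : exp (lam * e) * exp (- (lam * e)) = 1)
    by (rewrite <- exp_plus, Rplus_opp_r; apply exp_0).
  pose proof (exp_pos (- (lam * e))). pose proof (exp_ineq1_le (- (lam * e))).
  assert (A * exp (- (lam * e)) <= B).
  { apply Rle_trans with (B * exp (lam * e) * exp (- (lam * e))).
    - apply Rmult_le_compat_r; [lra|]. unfold B. rewrite Rmult_assoc. nra.
    - rewrite Rmult_assoc, Hinv. lra. }
  nra.
Qed.

End Monotone.

Section TimeScale.
Variables (theta : Z -> R) (omega : R) (p : nat).
Hypothesis theta_incr : forall k1 k2 : Z, (k1 < k2)%Z -> theta k1 < theta k2.
Hypothesis theta_period : forall k : Z, theta (k + 2 * Z.of_nat p)%Z = theta k + omega.
Hypothesis p_pos : (1 <= p)%nat.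

Notation S := (s_pt theta).

Lemma dlt_periodic k : dlt theta (k + Z.of_nat p) = dlt theta k.
Proof using theta_period.
  unfold dlt.
  replace (2 * (k + Z.of_nat p) + 1)%Z with ((2 * k + 1) + 2 * Z.of_nat p)%Z by ring.
  replace (2 * (k + Z.of_nat p))%Z with ((2 * k) + 2 * Z.of_nat p)%Z by ring.
  rewrite !theta_period. ring.
Qed.

Lemma s_pt_periodic k : S (k + Z.of_nat p) = S k + psi_omega theta omega p.
Proof using theta_period.
  unfold psi_omega.
  rewrite (sum_range_periodic _ 1 p), <- (sum_range_periodic _ k p) by apply dlt_periodic.
  pose proof (sum_range_telescope S k p) as TS.
  pose proof (sum_range_telescope (fun i => theta (2 * i)%Z) k p) as Tth. cbv beta in Tth.
  replace (2 * (k + Z.of_nat p))%Z with (2 * k + 2 * Z.of_nat p)%Z in Tth by ring.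
  rewrite theta_period in Tth.
  assert (E : sum_range (fun i => S (i + 1) - S i) k p =
     sum_range (fun i => theta (2 * (i + 1))%Z - theta (2 * i)%Z) k p - sum_range (dlt theta) k p).
  { rewrite <- sum_range_sub. apply sum_range_ext. intros i. rewrite s_pt_succ. unfold dlt.
    replace (2 * (i + 1))%Z with (2 * i + 2)%Z by ring. ring. }
  lra.
Qed.

Lemma theta_shift_periods M k :
  theta (k + 2 * Z.of_nat (M * p))%Z = theta k + INR M * omega.
Proof using theta_period.
  induction M as [|M IH]; [simpl; rewrite Z.add_0_r; ring|].
  replace (k + 2 * Z.of_nat (Datatypes.S M * p))%Z
    with ((k + 2 * Z.of_nat (M * p)) + 2 * Z.of_nat p)%Z
    by (rewrite Nat.mul_succ_l, Nat2Z.inj_add; ring).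
  rewrite theta_period, IH, S_INR. ring.
Qed.

Lemma psi_omega_pos : 0 < psi_omega theta omega p.
Proof.
  pose proof (s_pt_periodic 0). pose proof (s_pt_lt_succ theta theta_incr 0).
  pose proof (s_pt_le theta theta_incr (0 + 1) (0 + Z.of_nat p) ltac:(lia)). lra.
Qed.

Lemma dlt_le_delta_max k : dlt theta k <= delta_max theta p.
Proof.
  unfold delta_max.
  set (r := ((k - 1) mod Z.of_nat p)%Z).
  assert (Hr : (0 <= r < Z.of_nat p)%Z) by (apply Z.mod_pos_bound; lia).
  replace k with ((1 + Z.of_nat (Z.to_nat r)) + ((k - 1) / Z.of_nat p) * Z.of_nat p)%Z.
  - rewrite (Zperiodic_mult (dlt theta) _ dlt_periodic). apply max_range_ge. lia.
  - rewrite Z2Nat.id by lia. pose proof (Z.div_mod (k - 1) (Z.of_nat p) ltac:(lia)). lia.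
Qed.

Section ImpulsiveEstimate.
Variables (a lam K G B : R) (z g : R -> R) (gj : Z -> R).
Hypotheses (a_nonneg : 0 <= a) (lam_pos : 0 < lam) (K_nonneg : 0 <= K).
Hypothesis HK : K_bound theta a lam K.
Hypothesis z_deriv : forall k t, theta (2 * k - 1)%Z <= t <= theta (2 * k)%Z ->
  deriv_within (theta (2 * k - 1)%Z) (theta (2 * k)%Z) z t (- a * z t + g t).
Hypothesis g_bound : forall k t, theta (2 * k - 1)%Z <= t <= theta (2 * k)%Z -> Rabs (g t) <= G.
Hypothesis z_jump : forall k,
  z (theta (2 * k + 1)%Z) = (1 - dlt theta k * a) * z (theta (2 * k)%Z) + dlt theta k * gj k.
Hypothesis gj_bound : forall k, Rabs (gj k) <= G.
Hypothesis z_bound : forall t, inT0 theta t -> Rabs (z t) <= B.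

Lemma interval_increment_bound k l s e :
  S k < s <= S (k + 1) -> (l <= k + 1)%Z ->
  theta (2 * l - 1)%Z < e <= theta (2 * l)%Z -> psi_at theta l e <= s ->
  Rabs (u_val theta a k l s (psi_at theta l e) * z e
        - u_val theta a k l s (S (l - 1)) * z (theta (2 * l - 1)%Z))
  <= K * G / lam * (exp (- lam * (s - psi_at theta l e)) - exp (- lam * (s - S (l - 1)))).
Proof.
  intros Hs Hlk He Hes.
  rewrite <- psi_at_left. unfold u_val, psi_at in *.
  set (c0 := s + theta (2 * l)%Z - S l).
  replace (s - (e - theta (2 * l)%Z + S l)) with (c0 - e) by (unfold c0; ring).
  replace (s - (theta (2 * l - 1)%Z - theta (2 * l)%Z + S l))
    with (c0 - theta (2 * l - 1)%Z) by (unfold c0; ring).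
  apply weighted_increment_bound with (hi := theta (2 * l)%Z) (g := g); try lra.
  - apply z_deriv.
  - intros r Hr. apply (g_bound l); lra.
  - intros r Hr.
    assert (Hb := HK k l s (r - theta (2 * l)%Z + S l) Hs
                    ltac:(pose proof (psi_at_left theta l); unfold psi_at in *; lra) ltac:(lra)).
    unfold u_val in Hb.
    replace (s - (r - theta (2 * l)%Z + S l)) with (c0 - r) in Hb by (unfold c0; ring).
    exact Hb.
Qed.

Definition decay : R := exp (- lam * psi_omega theta omega p).

Lemma decay_range : 0 < decay < 1.
Proof.
  unfold decay. split; [apply exp_pos|].
  pose proof psi_omega_pos. rewrite <- exp_0. apply exp_increasing. nra.
Qed.

Section AtTime.
Variables (kap : Z) (t : R).
Hypothesis t_in : theta (2 * kap + 1)%Z < t <= theta (2 * kap + 2)%Z.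

Definition s_t : R := psi_at theta (kap + 1) t.
Definition weight (j : Z) : R := exp (- lam * (s_t - S j)).
Definition start_term (l : Z) : R :=
  u_val theta a kap l s_t (S (l - 1)) * z (theta (2 * l - 1)%Z).

Lemma s_t_range : S kap < s_t <= S (kap + 1).
Proof.
  pose proof (s_pt_succ theta kap). unfold s_t, psi_at.
  replace (2 * (kap + 1))%Z with (2 * kap + 2)%Z by lia. lra.
Qed.

(* Variation of constants over the last [N + 1] intervals before [t]: [start_term l]
   transports the value of [z] at the left end of interval [l] to [t]; the other two terms
   collect the forcing on these intervals and at the jumps between them. *)
Lemma unrolled_bound N :
  Rabs (z t) <= Rabs (start_term (kap + 1 - Z.of_nat N))
                + K * G / lam * (1 - weight (kap - Z.of_nat N))
                + K * delta_max theta p * G * sum_range (fun m => weight (kap - m)) 0 N.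
Proof.
  pose proof s_t_range as Hs.
  induction N as [|N IH].
  - simpl sum_range; simpl Z.of_nat. rewrite !Z.sub_0_r.
    assert (Hiv := interval_increment_bound kap (kap + 1) s_t t Hs ltac:(lia)).
    replace (2 * (kap + 1) - 1)%Z with (2 * kap + 1)%Z in Hiv by lia.
    replace (2 * (kap + 1))%Z with (2 * kap + 2)%Z in Hiv by lia.
    fold s_t in Hiv. specialize (Hiv ltac:(lra) ltac:(lra)).
    rewrite u_val_nil, Rminus_diag, Rmult_0_r, exp_0, Rmult_1_l, Rmult_0_r, exp_0 in Hiv.
    replace (kap + 1 - 1)%Z with kap in Hiv by lia.
    unfold start_term, weight. replace (kap + 1 - 1)%Z with kap by lia.
    replace (2 * (kap + 1) - 1)%Z with (2 * kap + 1)%Z by lia.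
    pose proof (Rabs_triang_inv (z t)
                  (u_val theta a kap (kap + 1) s_t (S kap) * z (theta (2 * kap + 1)%Z))).
    lra.
  - set (l := (kap - Z.of_nat N)%Z) in *.
    replace (kap + 1 - Z.of_nat N)%Z with (l + 1)%Z in IH by (unfold l; lia).
    replace (kap + 1 - Z.of_nat (Datatypes.S N))%Z with l by (unfold l; lia).
    replace (kap - Z.of_nat (Datatypes.S N))%Z with (l - 1)%Z by (unfold l; lia).
    rewrite sum_range_snoc. simpl (0 + Z.of_nat N)%Z. fold l.
    assert (Hlk : (l <= kap)%Z) by (unfold l; lia).
    assert (Hright : psi_at theta l (theta (2 * l)%Z) = S l) by (unfold psi_at; ring).
    assert (Hiv := interval_increment_bound kap l s_t (theta (2 * l)%Z) Hs ltac:(lia)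
       ltac:(pose proof (theta_incr (2 * l - 1) (2 * l) ltac:(lia)); lra)
       ltac:(rewrite Hright; pose proof (s_pt_le theta theta_incr l kap Hlk); lra)).
    rewrite Hright in Hiv. fold (start_term l) (weight l) (weight (l - 1)) in Hiv.
    assert (Hsplit : start_term (l + 1) =
              u_val theta a kap l s_t (S l) * z (theta (2 * l)%Z)
              + u_val theta a kap (l + 1) s_t (S l) * (dlt theta l * gj l)).
    { unfold start_term. replace (l + 1 - 1)%Z with l by lia.
      replace (2 * (l + 1) - 1)%Z with (2 * l + 1)%Z by lia.
      rewrite z_jump, (u_val_cons theta a kap l) by exact Hlk. ring. }
    assert (Hjump : Rabs (u_val theta a kap (l + 1) s_t (S l) * (dlt theta l * gj l))
                    <= K * delta_max theta p * G * weight l).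
    { pose proof (K_bound_left_end theta theta_incr a lam K kap (l + 1) s_t
                      ltac:(lra) lam_pos HK Hs ltac:(lia)) as Hu.
      replace (l + 1 - 1)%Z with l in Hu by lia. fold (weight l) in Hu.
      pose proof (dlt_pos theta theta_incr l). pose proof (dlt_le_delta_max l).
      pose proof (gj_bound l). pose proof (Rabs_pos (gj l)).
      pose proof (Rabs_pos (u_val theta a kap (l + 1) s_t (S l))).
      pose proof (exp_pos (- lam * (s_t - S l))).
      rewrite !Rabs_mult, (Rabs_pos_eq (dlt theta l)) by lra.
      apply Rle_trans with (K * weight l * (delta_max theta p * G)); [|unfold weight; lra].
      apply Rmult_le_compat; try apply Rmult_le_pos; auto; try lra.
      apply Rmult_le_compat; lra. }
    pose proof (Rabs_triang (u_val theta a kap l s_t (S l) * z (theta (2 * l)%Z))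
                  (u_val theta a kap (l + 1) s_t (S l) * (dlt theta l * gj l))).
    pose proof (Rabs_triang_inv (u_val theta a kap l s_t (S l) * z (theta (2 * l)%Z))
                  (start_term l)).
    rewrite <- Hsplit in *. lra.
Qed.

Lemma weight_shift_period j : weight (j - Z.of_nat p) = decay * weight j.
Proof.
  unfold weight, decay. rewrite <- exp_plus. f_equal.
  pose proof (s_pt_periodic (j - Z.of_nat p)) as H.
  replace (j - Z.of_nat p + Z.of_nat p)%Z with j in H by lia.
  rewrite H. ring.
Qed.

Lemma weight_unit j : (j <= kap)%Z -> 0 <= weight j <= 1.
Proof.
  intros H. unfold weight. split; [left; apply exp_pos|].
  pose proof (s_pt_le theta theta_incr j kap H). pose proof s_t_range.
  rewrite <- exp_0. apply exp_le_mono. nra.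
Qed.

Lemma weight_sum_bound N : sum_range (fun m => weight (kap - m)) 0 N <= INR p / (1 - decay).
Proof.
  pose proof decay_range as Hq.
  assert (Hp1 : INR p <= INR p / (1 - decay)).
  { pose proof (pos_INR p). unfold Rdiv.
    assert (1 <= / (1 - decay)) by (rewrite <- Rinv_1; apply Rinv_le_contravar; lra).
    nra. }
  assert (Hunit : forall N', sum_range (fun m => weight (kap - m)) 0 N' <= INR N')
    by (intros N'; apply sum_range_unit_bounds; intros; apply weight_unit; lia).
  induction N as [N IH] using lt_wf_ind.
  destruct (Nat.lt_ge_cases N p) as [Hlt|Hge].
  - eapply Rle_trans; [apply Hunit|]. eapply Rle_trans; [|apply Hp1]. apply le_INR; lia.
  - replace N with (p + (N - p))%nat by lia.
    rewrite sum_range_app.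
    replace (sum_range (fun m => weight (kap - m)) (0 + Z.of_nat p) (N - p))
      with (decay * sum_range (fun m => weight (kap - m)) 0 (N - p)).
    2:{ rewrite sum_range_shift, <- sum_range_scale. apply sum_range_ext. intros i.
        rewrite <- weight_shift_period. f_equal. lia. }
    pose proof (IH (N - p)%nat ltac:(lia)). pose proof (Hunit p).
    assert (decay * sum_range (fun m => weight (kap - m)) 0 (N - p)
            <= decay * (INR p / (1 - decay))) by (apply Rmult_le_compat_l; lra).
    assert (INR p + decay * (INR p / (1 - decay)) = INR p / (1 - decay)) by (field; lra).
    lra.
Qed.

Lemma weight_shift_periods M : weight (kap - Z.of_nat (M * p)) = decay ^ M * weight kap.
Proof.
  induction M as [|M IH]; [simpl; rewrite Z.sub_0_r; ring|].
  replace (kap - Z.of_nat (Datatypes.S M * p))%Z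
    with (kap - Z.of_nat (M * p) - Z.of_nat p)%Z by lia.
  rewrite weight_shift_period, IH. simpl. ring.
Qed.

Lemma impulsive_bound_at :
  Rabs (z t) <= (K / lam + INR p * delta_max theta p * K / (1 - decay)) * G.
Proof.
  pose proof decay_range as Hq. pose proof s_t_range as Hs.
  assert (HG : 0 <= G) by (pose proof (gj_bound 0); pose proof (Rabs_pos (gj 0)); lra).
  assert (Hdm : 0 <= delta_max theta p)
    by (pose proof (dlt_pos theta theta_incr 0); pose proof (dlt_le_delta_max 0); lra).
  assert (HB : 0 <= B).
  { assert (Ht : inT0 theta t).
    { exists (kap + 1)%Z. replace (2 * (kap + 1) - 1)%Z with (2 * kap + 1)%Z by lia.
      replace (2 * (kap + 1))%Z with (2 * kap + 2)%Z by lia. lra. }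
    pose proof (z_bound t Ht). pose proof (Rabs_pos (z t)). lra. }
  apply (Rle_of_le_plus_geometric _ _ (K * B) decay); [nra|lra|].
  intros M.
  pose proof (unrolled_bound (M * p)) as Hu.
  set (l := (kap + 1 - Z.of_nat (M * p))%Z) in Hu.
  replace (kap - Z.of_nat (M * p))%Z with (l - 1)%Z in Hu by (unfold l; lia).
  assert (Hstart : Rabs (start_term l) <= K * weight (l - 1) * B).
  { unfold start_term. rewrite Rabs_mult.
    apply Rmult_le_compat; try apply Rabs_pos.
    - apply (K_bound_left_end theta theta_incr); try lra; auto. unfold l; lia.
    - apply z_bound. exists l. pose proof (theta_incr (2 * l - 1) (2 * l) ltac:(lia)). lra. }
  assert (Hw : weight (l - 1) <= decay ^ M).
  { replace (l - 1)%Z with (kap - Z.of_nat (M * p))%Z by (unfold l; lia).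
    rewrite weight_shift_periods. pose proof (weight_unit kap ltac:(lia)).
    pose proof (pow_le decay M ltac:(lra)). nra. }
  pose proof (weight_unit (l - 1) ltac:(unfold l; lia)).
  pose proof (weight_sum_bound (M * p)).
  assert (K * G / lam * (1 - weight (l - 1)) <= K * G / lam).
  { assert (0 <= K * G / lam) by (apply Rmult_le_pos; [nra|left; apply Rinv_0_lt_compat; lra]).
    nra. }
  assert (K * delta_max theta p * G * sum_range (fun m => weight (kap - m)) 0 (M * p)
          <= K * delta_max theta p * G * (INR p / (1 - decay)))
    by (apply Rmult_le_compat_l; [apply Rmult_le_pos; [apply Rmult_le_pos|]|]; lra).
  assert (K * weight (l - 1) * B <= K * B * decay ^ M).
  { replace (K * weight (l - 1) * B) with (K * B * weight (l - 1)) by ring.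
    apply Rmult_le_compat_l; nra. }
  replace ((K / lam + INR p * delta_max theta p * K / (1 - decay)) * G)
    with (K * G / lam + K * delta_max theta p * G * (INR p / (1 - decay))) by (field; lra).
  lra.
Qed.

End AtTime.

(* The estimate at [t] used [s_{k-1} < psi(t)], which fails at the left end [theta_{2k-1}];
   there it follows by continuity. *)
Lemma impulsive_bound t : inT0 theta t ->
  Rabs (z t) <= (K / lam + INR p * delta_max theta p * K / (1 - decay)) * G.
Proof.
  intros [k Hk].
  assert (Hopen : forall r, theta (2 * k - 1)%Z < r <= theta (2 * k)%Z ->
            Rabs (z r) <= (K / lam + INR p * delta_max theta p * K / (1 - decay)) * G).
  { intros r Hr. apply (impulsive_bound_at (k - 1)).
    replace (2 * (k - 1) + 1)%Z with (2 * k - 1)%Z by lia.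
    replace (2 * (k - 1) + 2)%Z with (2 * k)%Z by lia. exact Hr. }
  destruct (Req_dec t (theta (2 * k - 1)%Z)) as [->|E]; [|apply Hopen; lra].
  pose proof (theta_incr (2 * k - 1) (2 * k) ltac:(lia)).
  apply (deriv_within_bound_left_end _ (theta (2 * k)%Z) _
           (- a * z (theta (2 * k - 1)%Z) + g (theta (2 * k - 1)%Z))).
  - lra.
  - apply z_deriv. lra.
  - exact Hopen.
Qed.

End ImpulsiveEstimate.
End TimeScale.

(** * The network *)

Definition coupling (m n r : nat) (C : nat -> nat -> nat -> nat -> R) (f : R -> R)
  (v : vec) (i j : nat) : R :=
  sumN m n r i j (fun h l => C i j h l * f (v h l) * v i j).

Lemma coupling_lipschitz m n r C f Mf Lf H Bd (u v : vec) i j :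
  valid m n i j ->
  (forall h l, valid m n h l -> 0 <= C i j h l) ->
  (forall s, Rabs (f s) <= Mf) ->
  (forall s1 s2, Rabs (f s1 - f s2) <= Lf * Rabs (s1 - s2)) -> 0 <= Lf ->
  (forall h l, valid m n h l -> Rabs (u h l) <= H /\ Rabs (u h l - v h l) <= Bd) ->
  Rabs (coupling m n r C f v i j - coupling m n r C f u i j)
    <= (Mf + H * Lf) * sumN m n r i j (fun h l => C i j h l) * Bd.
Proof.
  intros Hv HC Hf HL HLf Hb. unfold coupling, sumN.
  match goal with |- _ <= ?A * ?S * ?B => replace (A * S * B) with (S * (A * B)) by ring end.
  rewrite <- fold_Rplus_mul_r.
  apply fold_Rplus_diff_le. intros [h l] Hin. simpl.
  apply filter_In in Hin. destruct Hin as [Hin _]. apply In_idx in Hin.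
  destruct (Hb h l Hin) as [Hu1 Hd1]. destruct (Hb i j Hv) as [Hu2 Hd2].
  specialize (HC h l Hin).
  replace (C i j h l * f (v h l) * v i j - C i j h l * f (u h l) * u i j)
    with (C i j h l * (f (v h l) * (v i j - u i j) + (f (v h l) - f (u h l)) * u i j)) by ring.
  rewrite Rabs_mult, (Rabs_pos_eq (C i j h l)) by auto.
  apply Rmult_le_compat_l; auto.
  eapply Rle_trans; [apply Rabs_triang|]. rewrite !Rabs_mult.
  rewrite Rabs_minus_sym in Hd1, Hd2.
  pose proof (Hf (v h l)). pose proof (HL (v h l) (u h l)).
  pose proof (Rabs_pos (f (v h l))). pose proof (Rabs_pos (v i j - u i j)).
  pose proof (Rabs_pos (f (v h l) - f (u h l))). pose proof (Rabs_pos (u i j)).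
  assert (Rabs (f (v h l)) * Rabs (v i j - u i j) <= Mf * Bd) by (apply Rmult_le_compat; auto).
  assert (Rabs (f (v h l) - f (u h l)) * Rabs (u i j) <= Lf * Bd * H).
  { apply Rmult_le_compat; auto. eapply Rle_trans; [eauto|]. apply Rmult_le_compat_l; auto. }
  nra.
Qed.

Section ShiftedSolution.
Variables (m n r : nat) (a : nat -> nat -> R) (C : nat -> nat -> nat -> nat -> R) (f : R -> R).
Variables (theta : Z -> R) (zeta : Z -> vec) (x : R -> vec) (Np : Z) (P : R).
Hypothesis theta_shift : forall k, theta (k + 2 * Np)%Z = theta k + P.
Hypothesis zeta_shift : forall k i j, valid m n i j -> zeta (k + Np)%Z i j = zeta k i j.
Hypothesis x_sol : is_solution m n r a C f theta zeta x.

Lemma inT0_shift t : inT0 theta t -> inT0 theta (t + P).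
Proof.
  intros [k Hk]. exists (k + Np)%Z.
  replace (2 * (k + Np) - 1)%Z with ((2 * k - 1) + 2 * Np)%Z by ring.
  replace (2 * (k + Np))%Z with ((2 * k) + 2 * Np)%Z by ring.
  rewrite !theta_shift. lra.
Qed.

Lemma shift_difference_deriv k i j s : valid m n i j ->
  theta (2 * k - 1)%Z <= s <= theta (2 * k)%Z ->
  deriv_within (theta (2 * k - 1)%Z) (theta (2 * k)%Z) (fun s => x s i j - x (s + P) i j) s
    (- a i j * (x s i j - x (s + P) i j)
     + (coupling m n r C f (x (s + P)) i j - coupling m n r C f (x s) i j)).
Proof.
  intros Hv Hs.
  destruct (x_sol k i j Hv) as [Hd _]. destruct (x_sol (k + Np)%Z i j Hv) as [HdP _].
  replace (2 * (k + Np) - 1)%Z with ((2 * k - 1) + 2 * Np)%Z in HdP by ring.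
  replace (2 * (k + Np))%Z with ((2 * k) + 2 * Np)%Z in HdP by ring.
  rewrite !theta_shift, zeta_shift in HdP by exact Hv.
  specialize (HdP (s + P) ltac:(lra)). apply deriv_within_shift in HdP.
  pose proof (deriv_within_minus _ _ _ _ _ _ _ (Hd s Hs) HdP) as Hdiff.
  unfold coupling. match goal with |- deriv_within _ _ _ _ ?d => replace d with
    ((- a i j * x s i j - sumN m n r i j (fun h l => C i j h l * f (x s h l) * x s i j) + zeta k i j)
     - (- a i j * x (s + P) i j
        - sumN m n r i j (fun h l => C i j h l * f (x (s + P) h l) * x (s + P) i j) + zeta k i j))
    by ring end.
  exact Hdiff.
Qed.

Lemma shift_difference_jump k i j : valid m n i j ->
  x (theta (2 * k + 1)%Z) i j - x (theta (2 * k + 1)%Z + P) i j =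
    (1 - dlt theta k * a i j) * (x (theta (2 * k)%Z) i j - x (theta (2 * k)%Z + P) i j)
    + dlt theta k * (coupling m n r C f (x (theta (2 * k)%Z + P)) i j
                     - coupling m n r C f (x (theta (2 * k)%Z)) i j).
Proof.
  intros Hv.
  destruct (x_sol k i j Hv) as [_ Hj]. destruct (x_sol (k + Np)%Z i j Hv) as [_ HjP].
  assert (Hdlt : dlt theta (k + Np) = dlt theta k).
  { unfold dlt. replace (2 * (k + Np) + 1)%Z with ((2 * k + 1) + 2 * Np)%Z by ring.
    replace (2 * (k + Np))%Z with ((2 * k) + 2 * Np)%Z by ring. rewrite !theta_shift. ring. }
  replace (2 * (k + Np) + 1)%Z with ((2 * k + 1) + 2 * Np)%Z in HjP by ring.
  replace (2 * (k + Np))%Z with ((2 * k) + 2 * Np)%Z in HjP by ring.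
  rewrite !theta_shift, Hdlt, zeta_shift in HjP by exact Hv.
  unfold coupling. rewrite Hj, HjP. ring.
Qed.

End ShiftedSolution.

Section PeriodicShift.
Variables (m n r : nat) (a : nat -> nat -> R) (C : nat -> nat -> nat -> nat -> R) (f : R -> R).
Variables (theta : Z -> R) (omega : R) (p : nat) (K : nat -> nat -> R) (Mf Lf H : R).
Variables (zeta : Z -> vec) (x : R -> vec) (Np : Z) (P : R).
Hypothesis a_nonneg : forall i j, valid m n i j -> 0 <= a i j.
Hypothesis C_nonneg : forall i j h l, valid m n i j -> valid m n h l -> 0 <= C i j h l.
Hypothesis theta_incr : forall k1 k2 : Z, (k1 < k2)%Z -> theta k1 < theta k2.
Hypothesis theta_period : forall k : Z, theta (k + 2 * Z.of_nat p)%Z = theta k + omega.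
Hypothesis p_pos : (1 <= p)%nat.
Hypothesis lam_pos : 0 < minij m n (lamij theta omega p a).
Hypothesis f_bound : forall s, Rabs (f s) <= Mf.
Hypothesis Lf_nonneg : 0 <= Lf.
Hypothesis f_lipschitz : forall s1 s2, Rabs (f s1 - f s2) <= Lf * Rabs (s1 - s2).
Hypothesis K_nonneg : forall i j, valid m n i j -> 0 <= K i j.
Hypothesis HK :
  forall i j, valid m n i j -> K_bound theta (a i j) (lamij theta omega p a i j) (K i j).
Hypothesis theta_shift : forall k, theta (k + 2 * Np)%Z = theta k + P.
Hypothesis zeta_shift : forall k i j, valid m n i j -> zeta (k + Np)%Z i j = zeta k i j.
Hypothesis x_sol : is_solution m n r a C f theta zeta x.
Hypothesis x_bound : forall t, inT0 theta t -> vnorm m n (x t) <= H.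

Let c := (Mf + H * Lf) * cbar m n r theta omega p a C K.

(* [x - x (. + P)] solves the linear impulsive equation of [impulsive_bound], with
   forcing the coupling difference. *)
Lemma shift_difference_contract Bd :
  (forall t i j, inT0 theta t -> valid m n i j -> Rabs (x t i j - x (t + P) i j) <= Bd) ->
  forall t i j, inT0 theta t -> valid m n i j -> Rabs (x t i j - x (t + P) i j) <= c * Bd.
Proof.
  intros HBd t i j Ht Hv.
  assert (Hxb : forall s h l, inT0 theta s -> valid m n h l -> Rabs (x s h l) <= H)
    by (intros; eapply Rle_trans; [apply vnorm_ge; eauto|auto]).
  set (SC := sumN m n r i j (fun h l => C i j h l)).
  set (G := (Mf + H * Lf) * SC * Bd).
  assert (Hg : forall s, inT0 theta s ->
            Rabs (coupling m n r C f (x (s + P)) i j - coupling m n r C f (x s) i j) <= G).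
  { intros s Hs. apply coupling_lipschitz; auto. }
  assert (Hlam : 0 < lamij theta omega p a i j)
    by (eapply Rlt_le_trans; [apply lam_pos|apply minij_le; auto]).
  assert (Hz : Rabs (x t i j - x (t + P) i j) <= Kfac theta omega p a K i j * G).
  { apply (impulsive_bound theta omega p theta_incr theta_period p_pos (a i j)
             (lamij theta omega p a i j) (K i j) G Bd (fun s => x s i j - x (s + P) i j)
             (fun s => coupling m n r C f (x (s + P)) i j - coupling m n r C f (x s) i j)
             (fun k => coupling m n r C f (x (theta (2 * k)%Z + P)) i j
                       - coupling m n r C f (x (theta (2 * k)%Z)) i j));
      auto; try lra.
    - intros k s Hs. apply (shift_difference_deriv m n r a C f theta zeta x Np); auto.
    - intros k s Hs. apply Hg. exists k; auto.
    - intros k. apply (shift_difference_jump m n r a C f theta zeta x Np); auto.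
    - intros k. apply Hg. exists k. pose proof (theta_incr (2 * k - 1) (2 * k) ltac:(lia)). lra. }
  assert (HKS : Kfac theta omega p a K i j * SC <= cbar m n r theta omega p a C K)
    by (apply (maxij_ge m n
                 (fun i j => Kfac theta omega p a K i j * sumN m n r i j (fun h l => C i j h l)));
        auto).
  assert (HH : 0 <= H) by (pose proof (vnorm_nonneg m n (x t)); pose proof (x_bound t Ht); lra).
  assert (HB : 0 <= Bd)
    by (pose proof (HBd t i j Ht Hv); pose proof (Rabs_pos (x t i j - x (t + P) i j)); lra).
  assert (0 <= Mf) by (pose proof (f_bound 0); pose proof (Rabs_pos (f 0)); lra).
  eapply Rle_trans; [exact Hz|]. unfold G, c.
  replace (Kfac theta omega p a K i j * ((Mf + H * Lf) * SC * Bd))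
    with (Kfac theta omega p a K i j * SC * ((Mf + H * Lf) * Bd)) by ring.
  replace ((Mf + H * Lf) * cbar m n r theta omega p a C K * Bd)
    with (cbar m n r theta omega p a C K * ((Mf + H * Lf) * Bd)) by ring.
  apply Rmult_le_compat_r; [apply Rmult_le_pos; nra|exact HKS].
Qed.

Lemma shift_invariant : c < 1 ->
  forall t i j, inT0 theta t -> valid m n i j -> x (t + P) i j = x t i j.
Proof.
  intros Hc t i j Ht Hv.
  assert (Hgeom : forall N t i j, inT0 theta t -> valid m n i j ->
            Rabs (x t i j - x (t + P) i j) <= 0 + 2 * H * c ^ N).
  { induction N as [|N IH]; intros s h l Hs Hhl.
    - pose proof (vnorm_ge m n (x s) h l Hhl). pose proof (x_bound s Hs).
      pose proof (vnorm_ge m n (x (s + P)) h l Hhl).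
      pose proof (x_bound (s + P) (inT0_shift theta Np P theta_shift s Hs)).
      pose proof (Rabs_triang (x s h l) (- x (s + P) h l)) as Htri. rewrite Rabs_Ropp in Htri.
      rewrite pow_O. unfold Rminus. lra.
    - replace (0 + 2 * H * c ^ Datatypes.S N) with (c * (0 + 2 * H * c ^ N)) by (simpl; ring).
      apply shift_difference_contract; auto. }
  assert (HH : 0 <= H) by (pose proof (vnorm_nonneg m n (x t)); pose proof (x_bound t Ht); lra).
  pose proof (Rle_of_le_plus_geometric _ _ (2 * H) c ltac:(lra) Hc (fun N => Hgeom N t i j Ht Hv)).
  pose proof (Rabs_pos (x t i j - x (t + P) i j)).
  assert (Rabs (x t i j - x (t + P) i j) = 0) by lra.
  destruct (Req_dec (x t i j - x (t + P) i j) 0); [lra|]. exfalso; eapply Rabs_no_R0; eauto.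
Qed.

End PeriodicShift.

Lemma lcm_div_mul_multiple q0 p : (1 <= p)%nat ->
  exists c, (Nat.lcm q0 p / p * p = c * q0)%nat.
Proof.
  intros Hp.
  destruct (Nat.divide_lcm_r q0 p) as [c1 Hc1]. destruct (Nat.divide_lcm_l q0 p) as [c2 Hc2].
  exists c2. rewrite Hc1, Nat.div_mul by lia. lia.
Qed.

Theorem mainTheorem5
  (m n r : nat) (a : nat -> nat -> R) (C : nat -> nat -> nat -> nat -> R) (f : R -> R)
  (theta : Z -> R) (omega : R) (p : nat)
  (Lambda : vec -> Prop) (F : vec -> vec) (MF : R)
  (K : nat -> nat -> R) (Mf Lf : R)
  (zeta : Z -> vec) (q0 : nat) (x : R -> vec) :
  (1 <= m)%nat -> (1 <= n)%nat ->
  (forall i j, valid m n i j -> 0 < a i j) ->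
  (forall i j h l, valid m n i j -> valid m n h l -> 0 <= C i j h l) ->
  continuity f ->
  (forall k1 k2 : Z, (k1 < k2)%Z -> theta k1 < theta k2) ->
  theta (-1)%Z < 0 < theta 0%Z ->
  0 < omega -> (1 <= p)%nat ->
  (forall k : Z, theta (k + 2 * Z.of_nat p)%Z = theta k + omega) ->
  vcompact m n Lambda ->
  (forall v, Lambda v -> Lambda (F v)) ->
  vcont_on m n Lambda F ->
  (* M_F = max_{eta in Lambda} ||F eta|| *)
  (exists v, Lambda v /\ vnorm m n (F v) = MF) ->
  (forall v, Lambda v -> vnorm m n (F v) <= MF) ->
  (* zeta in Theta *)
  (forall k : Z, Lambda (zeta k)) ->
  (forall (k : Z) i j, valid m n i j -> zeta (k + 1)%Z i j = F (zeta k) i j) ->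
  (* (C1) *)
  (forall i j (k : Z), valid m n i j -> dlt theta k * a i j <> 1) ->
  (* (C2) *)
  0 < minij m n (lamij theta omega p a) ->
  (* (C3) *)
  0 < Mf -> (forall s, Rabs (f s) <= Mf) ->
  (* (C4) *)
  0 < Lf -> (forall s1 s2, Rabs (f s1 - f s2) <= Lf * Rabs (s1 - s2)) ->
  (forall i j, valid m n i j -> 0 < K i j) ->
  (forall i j, valid m n i j -> K_bound theta (a i j) (lamij theta omega p a i j) (K i j)) ->
  (* (C5) *)
  (Mf + H0 m n r theta omega p a C K Mf MF * Lf) * cbar m n r theta omega p a C K < 1 ->
  (1 <= q0)%nat ->
  (forall (k : Z) i j, valid m n i j -> zeta (k + Z.of_nat q0)%Z i j = zeta k i j) ->
  (* x = phi_zeta: the solution of (N_zeta) on T_0 with sup ||x|| <= H_0 *)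
  is_solution m n r a C f theta zeta x ->
  (forall t, inT0 theta t -> vnorm m n (x t) <= H0 m n r theta omega p a C K Mf MF) ->
  forall t, inT0 theta t ->
    forall i j, valid m n i j ->
      x (t + INR (Nat.lcm q0 p / p) * omega) i j = x t i j.
Proof.
  intros _ _ Ha HC _ Hinc _ _ Hp Hper _ _ _ _ _ _ _ _ Hlam _ Hf HLf HL HK HKb HC5 _ Hzp Hsol Hx
    t Ht i j Hv.
  set (p0 := (Nat.lcm q0 p / p)%nat).
  destruct (lcm_div_mul_multiple q0 p Hp) as [c Hc]. fold p0 in Hc.
  apply (shift_invariant m n r a C f theta omega p K Mf Lf (H0 m n r theta omega p a C K Mf MF)
           zeta x (Z.of_nat (p0 * p))); auto; try lra.
  - intros i0 j0 Hv0. apply Rlt_le, Ha, Hv0.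
  - intros i0 j0 Hv0. apply Rlt_le, HK, Hv0.
  - apply (theta_shift_periods theta omega p Hper).
  - intros k i0 j0 Hv0. rewrite Hc, Nat2Z.inj_mul.
    exact (Zperiodic_mult (fun k => zeta k i0 j0) _ (fun k => Hzp k i0 j0 Hv0) (Z.of_nat c) k).
Qed.
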